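(* Let $V$ be a vector space over a field $F$, let $n\ge1$, and let $(p_j^+,p_j^-)_{j=1}^n$ be a valid widget in $V$. Fix $i\in\{1,\dots,n\}$ and $c\in F$. Then the widget obtained by replacing $p_i^+$ with $p_i^+ + c\,p_i^-$ (and leaving all other points unchanged) is again valid.
   Context: A widget with $n$ pairs in $V$ is an indexed family of $n$ pairs of vectors $p_j=(p_j^+,p_j^-)$, $j=1,\dots,n$, in $V$. A section of a widget is a set of points containing at most one point from each pair. A widget with $n$ pairs is legal if every section spans a linear subspace of $V$ of dimension at most $n-1$. A widget with $n$ pairs is full if the linear span of all its $2n$ points has dimension at least $n$. A widget is valid if it is both legal and full. *)

From mathcomp Require Import all_boot all_order all_algebra.
Set Implicit Arguments. Unset Strict Implicit. Unset Printing Implicit Defensive.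
Import GRing.Theory.
Local Open Scope ring_scope.

Definition lin_indep (F : fieldType) (V : lmodType F) (s : seq V) : Prop :=
  forall c : 'I_(size s) -> F,
    \sum_(k < size s) c k *: s`_k = 0 -> forall k, c k = 0.

(* dim span(A) <= d, for a set A of vectors (given as a predicate):
   every linearly independent finite family of vectors of A has <= d members.
   (For a set spanning a subspace W, this is exactly dim W <= d.) *)
Definition span_dim_le (F : fieldType) (V : lmodType F) (A : V -> Prop) (d : nat) : Prop :=
  forall s : seq V, (forall v, v \in s -> A v) -> lin_indep s -> (size s <= d)%N.

Definition span_dim_ge (F : fieldType) (V : lmodType F) (A : V -> Prop) (d : nat) : Prop :=
  exists s : seq V, [/\ forall v, v \in s -> A v, lin_indep s & (d <= size s)%N].

(* A widget with n pairs: pairs (pp j, pm j), j : 'I_n.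
   A section is given by a choice function sel : 'I_n -> option bool
   (None: no point from pair j; Some true: p_j^+; Some false: p_j^-). *)
Definition section_pts (F : fieldType) (V : lmodType F) (n : nat)
  (pp pm : 'I_n -> V) (sel : 'I_n -> option bool) : V -> Prop :=
  fun v => exists j, match sel j with
                     | Some true => v = pp j
                     | Some false => v = pm j
                     | None => False
                     end.

Definition all_pts (F : fieldType) (V : lmodType F) (n : nat)
  (pp pm : 'I_n -> V) : V -> Prop :=
  fun v => exists j, v = pp j \/ v = pm j.

Definition widget_legal (F : fieldType) (V : lmodType F) (n : nat) (pp pm : 'I_n -> V) : Prop :=
  forall sel : 'I_n -> option bool, span_dim_le (section_pts pp pm sel) n.-1.

Definition widget_full (F : fieldType) (V : lmodType F) (n : nat) (pp pm : 'I_n -> V) : Prop :=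
  span_dim_ge (all_pts pp pm) n.

Definition widget_valid (F : fieldType) (V : lmodType F) (n : nat) (pp pm : 'I_n -> V) : Prop :=
  widget_legal pp pm /\ widget_full pp pm.

(** Replacing [p_i^+] by [q = p_i^+ + c p_i^-] does not change the span of all
    the points, so fullness is preserved.  For legality, let [A] be the part of
    a section outside pair [i] and [b] a basis of [span A].  If [q] lies in
    [span A], adding it costs nothing.  Otherwise one of [p_i^+], [p_i^-] is
    outside [span A] as well, and the section [A + p_i^+] or [A + p_i^-] of
    the old widget shows [dim span A + 1 <= n - 1]; that is exactly the bound
    needed for [span (A + q)]. *)

From mathcomp Require Import all_boot all_order all_algebra.
From Stdlib Require Import Classical.
Set Implicit Arguments. Unset Strict Implicit. Unset Printing Implicit Defensive.
Import GRing.Theory.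
Local Open Scope ring_scope.

Section FiniteSpan.
Variables (F : fieldType) (V : lmodType F).
Implicit Types (t s b ts : seq V) (A B : V -> Prop) (u v w : V).

Definition in_span t v : Prop :=
  exists d : 'I_(size t) -> F, v = \sum_(k < size t) d k *: t`_k.

Definition spans t A : Prop := forall v, A v -> in_span t v.

Lemma in_span0 t : in_span t 0.
Proof. by exists (fun _ => 0); rewrite big1 // => k _; rewrite scale0r. Qed.

Lemma in_spanD t u v : in_span t u -> in_span t v -> in_span t (u + v).
Proof.
move=> [d1 ->] [d2 ->]; exists (fun k => d1 k + d2 k).
by rewrite -big_split; apply: eq_bigr => k _; rewrite scalerDl.
Qed.

Lemma in_spanZ t a v : in_span t v -> in_span t (a *: v).
Proof.
move=> [d ->]; exists (fun k => a * d k).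
by rewrite scaler_sumr; apply: eq_bigr => k _; rewrite scalerA.
Qed.

Lemma in_span_mem t v : v \in t -> in_span t v.
Proof.
move=> vt; have vi : (index v t < size t)%N by rewrite index_mem.
exists (fun k => if k == Ordinal vi then 1 else 0).
rewrite (bigD1 (Ordinal vi)) //= eqxx scale1r nth_index // big1 ?addr0 //.
by move=> k /negbTE ->; rewrite scale0r.
Qed.

Lemma in_span_trans t b v :
  (forall w, w \in t -> in_span b w) -> in_span t v -> in_span b v.
Proof.
move=> tb [d ->]; apply: (big_ind (in_span b)); [exact: in_span0|exact: in_spanD|].
by move=> k _; apply/in_spanZ/tb/mem_nth.
Qed.

Lemma in_span_cons t w v : in_span t v -> in_span (w :: t) v.
Proof. by apply: in_span_trans => u ut; apply: in_span_mem; rewrite inE ut orbT. Qed.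

Lemma lin_indep_cons t v : lin_indep t -> ~ in_span t v -> lin_indep (v :: t).
Proof.
move=> It Nv c /=; rewrite big_ord_recl /= => sum0.
have c0 : c ord0 = 0.
  have [//|nz] := eqVneq (c ord0) 0; case: Nv.
  exists (fun k => - (c ord0)^-1 * c (lift ord0 k)).
  have -> : \sum_(k < size t) (- (c ord0)^-1 * c (lift ord0 k)) *: t`_k
          = - (c ord0)^-1 *: (- (c ord0 *: v)).
    rewrite -(_ : \sum_(k < size t) c (lift ord0 k) *: t`_k = - (c ord0 *: v)).
      by rewrite scaler_sumr; apply: eq_bigr => k _; rewrite scalerA.
    by apply/eqP; rewrite -addr_eq0 addrC sum0.
  by rewrite scaleNr scalerN opprK scalerA mulVf ?scale1r.
move: sum0; rewrite c0 scale0r add0r => /It ct0 k.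
case: (unliftP ord0 k) => [k' ->|->] //; exact: ct0.
Qed.

(* Steinitz exchange, obtained from the dimension bound on free families of
   coordinate rows in ['rV_(size t)]. *)
Lemma lin_indep_size_le s t :
  (forall v, v \in s -> in_span t v) -> lin_indep s -> (size s <= size t)%N.
Proof.
move=> st Is.
pose f (x : 'rV[F]_(size t)) : V := \sum_(j < size t) x 0 j *: t`_j.
have coords (k : 'I_(size s)) : exists x, s`_k = f x.
  have [e ->] := st _ (mem_nth 0 (ltn_ord k)).
  by exists (\row_j e j); apply: eq_bigr => j _; rewrite mxE.
have [d sd] := fin_all_exists coords.
pose X := [tuple d k | k < size s].
have XE (k : 'I_(size s)) : X`_k = d k by rewrite -tnth_nth tnth_mktuple.
have freeX : free X.
  apply/freeP => a sum0; apply: Is; apply: etrans (_ : f 0 = 0); last first.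
    by rewrite /f big1 // => j _; rewrite mxE scale0r.
  rewrite -sum0 /f; under eq_bigr => k _ do rewrite sd /f scaler_sumr.
  rewrite exchange_big /=; apply: eq_bigr => j _.
  rewrite summxE scaler_suml; apply: eq_bigr => k _.
  by rewrite XE !mxE scalerA.
rewrite -(size_tuple X) -(eqP freeX).
by have := dimvS (subvf <<X>>%VS); rewrite dimvf /dim /= mul1n.
Qed.

Lemma exists_basis A ts : (forall v, A v -> v \in ts) ->
  exists b, [/\ forall v, v \in b -> A v, lin_indep b & spans b A].
Proof.
move=> Ats.
suff [b [bA Ib tb]] : exists b, [/\ forall v, v \in b -> A v, lin_indep b &
                                 forall v, v \in ts -> A v -> in_span b v].
  by exists b; split=> // v Av; exact: tb (Ats v Av) Av.
elim: ts {Ats} => [|w ts [b [bA Ib tsb]]].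
  by exists [::]; split=> // c _ [].
have [[Aw Nw]|] := classic (A w /\ ~ in_span b w).
  exists (w :: b); split; last 2 first.
  - exact: lin_indep_cons.
  - move=> v; rewrite inE => /predU1P[-> _|vts Av]; first exact/in_span_mem/mem_head.
    exact/in_span_cons/tsb.
  by move=> v; rewrite inE => /predU1P[->|/bA].
move=> /not_and_or wb; exists b; split=> // v.
rewrite inE => /predU1P[-> Aw|]; last exact: tsb.
by case: wb => // /NNPP.
Qed.

Lemma span_dim_le_subset A B d :
  (forall v, A v -> B v) -> span_dim_le B d -> span_dim_le A d.
Proof. by move=> AB Bd s sA; apply: Bd => v /sA /AB. Qed.

Lemma span_dim_le_mono A m d : (m <= d)%N -> span_dim_le A m -> span_dim_le A d.
Proof. by move=> md Am s sA Is; apply: leq_trans md; exact: Am. Qed.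

Lemma span_dim_le_spans A t : spans t A -> span_dim_le A (size t).
Proof. by move=> tA s sA; apply: lin_indep_size_le => v /sA /tA. Qed.

Lemma span_dim_le_add_combination A ts u w c d :
  (forall v, A v -> v \in ts) ->
  span_dim_le (fun v => A v \/ v = u) d -> span_dim_le (fun v => A v \/ v = w) d ->
  span_dim_le (fun v => A v \/ v = u + c *: w) d.
Proof.
move=> Ats Au Aw; have [b [bA Ib bspA]] := exists_basis Ats.
have b_le x : span_dim_le (fun v => A v \/ v = x) d -> (size b <= d)%N.
  by apply; [move=> v /bA; left|].
have b_lt x : span_dim_le (fun v => A v \/ v = x) d -> ~ in_span b x -> (size b < d)%N.
  move=> Ax Nx; apply: (Ax (x :: b)); last exact: lin_indep_cons.
  by move=> v; rewrite inE => /predU1P[->|/bA]; [right|left].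
have [q_in|q_out] := classic (in_span b (u + c *: w)).
  by apply: span_dim_le_mono (b_le _ Au) _; apply: span_dim_le_spans => v [/bspA|->].
have b_lt_d : (size b < d)%N.
  have [u_in|] := classic (in_span b u); last exact: b_lt _ Au.
  by apply: (b_lt _ Aw) => w_in; apply/q_out/in_spanD/in_spanZ.
apply: span_dim_le_mono b_lt_d _; apply: (span_dim_le_spans (t := u + c *: w :: b)).
by move=> v [/bspA/in_span_cons|->] //; apply/in_span_mem/mem_head.
Qed.

Lemma span_dim_ge_spans A B ts d : (forall v, B v -> v \in ts) ->
  (forall t, spans t B -> spans t A) -> span_dim_ge A d -> span_dim_ge B d.
Proof.
move=> Bts BA [s [sA Is ds]]; have [b [bB Ib bspB]] := exists_basis Bts.
exists b; split=> //; apply: leq_trans ds _.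
by apply: lin_indep_size_le Is => v /sA; apply: BA.
Qed.

End FiniteSpan.

Section Widget.
Variables (F : fieldType) (V : lmodType F) (n : nat).
Implicit Types (pp pm : 'I_n -> V) (sel : 'I_n -> option bool) (i : 'I_n) (v : V).

Definition choice_pt (x y : V) (o : option bool) v : Prop :=
  match o with Some true => v = x | Some false => v = y | None => False end.

Definition section_off pp pm sel i v : Prop :=
  exists2 j, j != i & choice_pt (pp j) (pm j) (sel j) v.

Definition sel_at sel i (o : option bool) j := if j == i then o else sel j.

Definition shear pp pm i (c : F) j := if j == i then pp i + c *: pm i else pp j.

Definition widget_pts pp pm : seq V := map pp (enum 'I_n) ++ map pm (enum 'I_n).

Lemma all_pts_widget_pts pp pm v : all_pts pp pm v -> v \in widget_pts pp pm.
Proof. by move=> [j [->|->]]; rewrite mem_cat map_f ?orbT ?mem_enum. Qed.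

Lemma section_off_widget_pts pp pm sel i v :
  section_off pp pm sel i v -> v \in widget_pts pp pm.
Proof.
move=> [j _ pt]; apply: all_pts_widget_pts; exists j.
by move: pt; case: (sel j) => [[]|]; [left|right|].
Qed.

Lemma section_ptsE i pp pm sel v : section_pts pp pm sel v <->
  section_off pp pm sel i v \/ choice_pt (pp i) (pm i) (sel i) v.
Proof.
split=> [[j pt]|[[j _ pt]|pt]]; [|by exists j|by exists i].
by case: (eqVneq j i) pt => [-> | ji] pt; [right | left; exists j].
Qed.

Lemma section_pts_at pp pm sel i o v :
  section_off pp pm sel i v \/ choice_pt (pp i) (pm i) o v ->
  section_pts pp pm (sel_at sel i o) v.
Proof.
case=> [[j ji pt]|pt]; first by exists j; rewrite /sel_at (negbTE ji).
by exists i; rewrite /sel_at eqxx.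
Qed.

Lemma section_off_shear pp pm sel i c v :
  section_off (shear pp pm i c) pm sel i v -> section_off pp pm sel i v.
Proof. by move=> [j ji pt]; exists j; rewrite // /shear (negbTE ji) in pt. Qed.

Lemma widget_legal_shear pp pm i c :
  widget_legal pp pm -> widget_legal (shear pp pm i c) pm.
Proof.
move=> legal sel; have [plus_i | not_plus] := eqVneq (sel i) (Some true); last first.
  apply: span_dim_le_subset (legal sel) => v /(section_ptsE i) [/section_off_shear|pt].
    by move=> off; apply/(section_ptsE i); left.
  by apply/(section_ptsE i); right; move: pt not_plus; case: (sel i) => [[]|].
apply: (span_dim_le_subset
          (B := fun v => section_off pp pm sel i v \/ v = pp i + c *: pm i)).
  move=> v /(section_ptsE i) [/section_off_shear|]; first by left.
  by rewrite plus_i /shear eqxx; right.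
apply: span_dim_le_add_combination (@section_off_widget_pts pp pm sel i) _ _.
  apply: span_dim_le_subset (legal (sel_at sel i (Some true))) => v off_or_pt.
  exact: section_pts_at.
apply: span_dim_le_subset (legal (sel_at sel i (Some false))) => v off_or_pt.
exact: section_pts_at.
Qed.

Lemma widget_full_shear pp pm i c :
  widget_full pp pm -> widget_full (shear pp pm i c) pm.
Proof.
apply: span_dim_ge_spans (@all_pts_widget_pts _ _) _ => t tB v [j [->|->]]; last first.
  by apply: tB; exists j; right.
have tpp k : in_span t (shear pp pm i c k) by apply: tB; exists k; left.
have [->|ji] := eqVneq j i; last by have := tpp j; rewrite /shear (negbTE ji).
have -> : pp i = shear pp pm i c i + (- c) *: pm i by rewrite /shear eqxx scaleNr addrK.
by apply: in_spanD (tpp i) (in_spanZ _ (tB _ _)); exists i; right.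
Qed.

End Widget.

Theorem lemma2 (F : fieldType) (V : lmodType F) (n : nat) (hn : (1 <= n)%N)
  (pp pm : 'I_n -> V) (i : 'I_n) (c : F) :
  widget_valid pp pm ->
  widget_valid (fun j => if j == i then pp i + c *: pm i else pp j) pm.
Proof.
by case=> [legal full]; split; [exact: widget_legal_shear | exact: widget_full_shear].
Qed.
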